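(* Let $k$ be a field, $A=kQ_A/I_A$ a monomial algebra with vertices $e_1,\dots,e_n$, and $B$ the algebra obtained by gluing the distinct non-isolated vertices $e_1,e_n$. Then there is a decomposition of $k$-vector spaces $\mathrm{Ker}(\delta^0_{(B)_{\ge1}})=\psi_0(\mathrm{Ker}(\delta^0_{(A)_{\ge1}}))\oplus Z_{nsp}$. In particular, if $e_1,e_n$ lie in the same block, then $\dim_k\mathrm{Ker}(\delta^0_{(B)_{\ge1}})=\dim_k\mathrm{Ker}(\delta^0_{(A)_{\ge1}})+\mathrm{nsp}(1,n)$; if they lie in different blocks, then $\dim_k\mathrm{Ker}(\delta^0_{(B)_{\ge1}})=\dim_k\mathrm{Ker}(\delta^0_{(A)_{\ge1}})$.
   Context: Monomial algebra: $A=kQ_A/I_A$, $Q_A$ finite quiver, $I_A$ admissible, generated by a minimal set $Z_A$ of paths of length $\ge2$; $\mathcal B_A$: paths (including trivial ones) avoiding elements of $Z_A$ as subpaths; $(\mathcal B_A)_{\ge1}$ those of length $\ge1$. Gluing: $B\subseteq A$ generated by $f_1=e_1+e_n$, $f_i=e_i$ ($2\le i\le n-1$) and all arrows; $B\cong kQ_B/I_B$, $Q_B$ obtained by identifying $e_1,e_n$ to $f_1$ (arrow $\alpha\mapsto\alpha^*$, path $p=a_m\cdots a_1\mapsto p^*=a_m^*\cdots a_1^*$, $e_i^*=f_i$, $e_1^*=e_n^*=f_1$), $I_B$ generated by $\{r^*:r\in Z_A\}$ and the paths $b^*c^*$ with $b,c$ arrows, $t(c),s(b)\in\{e_1,e_n\}$,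 $t(c)\ne s(b)$; $\mathcal B_B$ its basis paths. Blocks correspond to connected components of $Q_A$. For path sets $X,Y$, $k(X\|Y)$ has basis the pairs $x\|y$ of parallel paths. For monomial $\Lambda=kQ/\langle Z\rangle$ with basis paths $\mathcal B$, $\delta^0:k(Q_0\|\mathcal B)\to k(Q_1\|\mathcal B)$, $e\|\gamma\mapsto\sum_{a\in Q_1,s(a)=e,a\gamma\in\mathcal B}a\|a\gamma-\sum_{a\in Q_1,t(a)=e,\gamma a\in\mathcal B}a\|\gamma a$; $\delta^0_{(A)_{\ge1}}$ is the restriction of $\delta^0_A$ to $k((Q_A)_0\|(\mathcal B_A)_{\ge1})$, similarly for $B$. $\psi_0:k((Q_A)_0\|\mathcal B_A)\to k((Q_B)_0\|\mathcal B_B)$, $e\|p\mapsto e^*\|p^*$. A non-special path is a path $p\in\mathcal B_A$ from $e_1$ to $e_n$ or from $e_n$ to $e_1$ such that $ap\in I_A$ and $pb\in I_A$ for all arrows $a,b$ (equivalently $\delta^0_B(f_1\|p^* )=0$); $\mathrm{nsp}(1,n)$ is their number, and $Z_{nsp}$ is the span of the elements $f_1\|p^*$ over non-special paths $p$. *)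

From HB Require Import structures.
From mathcomp Require Import all_boot all_order all_algebra.
Set Implicit Arguments. Unset Strict Implicit. Unset Printing Implicit Defensive.
Import GRing.Theory.

(* Generic machinery for a monomial algebra  Lambda = kQ/<Z>.               *)
(* A path is a pair (v, w) : V * seq E, where w = [:: a_1; ...; a_m] lists  *)
(* the arrows in the order they are traversed (so the paper's path          *)
(* a_m ... a_1 is (s a_1, [:: a_1; ...; a_m])); the trivial path e_v is     *)
(* (v, [::]).  A relation r in Z is a (nontrivial) path, stored as its      *)
(* arrow sequence.                                                          *)

Section Paths.
Variables (V E : finType) (s t : E -> V).

Definition qpath := (V * seq E)%type.

Definition is_path (p : qpath) : bool :=
  match p.2 with
  | [::] => true
  | a :: w => (s a == p.1) && path (fun x y => t x == s y) a w
  end.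

Definition psrc (p : qpath) : V := p.1.
Definition ptgt (p : qpath) : V := last p.1 [seq t a | a <- p.2].
Definition plen (p : qpath) : nat := size p.2.

Definition is_relation (r : seq E) : bool :=
  if r is a :: w then (1 <= size w)%N && path (fun x y => t x == s y) a w
  else false.

(* the path a p (first p, then the arrow a) and p a (first a, then p) *)
Definition arrow_after (p : qpath) (a : E) : qpath := (p.1, rcons p.2 a).
Definition arrow_before (a : E) (p : qpath) : qpath := (s a, a :: p.2).

Fixpoint words (L : nat) : seq (seq E) :=
  if L is L'.+1 then [seq a :: w | a <- enum E, w <- words L'] else [:: [::]].

Definition all_paths (N : nat) : seq qpath :=
  filter is_path
    [seq (v, w) | v <- enum V, w <- flatten [seq words L | L <- iota 0 N]].

Variable Z : seq (seq E).

Definition in_basis (p : qpath) : bool :=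
  is_path p && all (fun r => ~~ infix r p.2) Z.

(* enumeration of B (resp. B_{>=1}); it is complete as soon as every path
   of length N lies in the ideal (hypothesis of the theorem). *)
Definition basis (N : nat) : seq qpath := filter in_basis (all_paths N).
Definition basis_pos (N : nat) : seq qpath :=
  [seq p <- basis N | (0 < plen p)%N].

(* the bases of k(Q_0 || B_{>=1}) and of k(Q_1 || B): parallel pairs *)
Definition dom0 (N : nat) : seq (V * qpath) :=
  [seq x <- [seq (e, p) | e <- enum V, p <- basis_pos N]
     | (psrc x.2 == x.1) && (ptgt x.2 == x.1)].
Definition cod0 (N : nat) : seq (E * qpath) :=
  [seq x <- [seq (a, p) | a <- enum E, p <- basis N]
     | (psrc x.2 == s x.1) && (ptgt x.2 == t x.1)].

Variable k : fieldType.
Local Open Scope ring_scope.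

(* coefficient of the basis element a||d in delta^0(e||g) *)
Definition delta0_coef (x : V * qpath) (y : E * qpath) : k :=
  let: (e, g) := x in let: (a, d) := y in
  (nat_of_bool [&& s a == e, d == arrow_after g a & in_basis (arrow_after g a)])%:R
  - (nat_of_bool [&& t a == e, d == arrow_before a g & in_basis (arrow_before a g)])%:R.

(* matrix of delta^0_{(Lambda)_{>=1}} : k(Q_0||B_{>=1}) -> k(Q_1||B),
   acting on row vectors of coordinates *)
Definition delta0 (N : nat) : 'M[k]_(size (dom0 N), size (cod0 N)) :=
  \matrix_(i, j) delta0_coef (tnth (in_tuple (dom0 N)) i)
                             (tnth (in_tuple (cod0 N)) j).

(* e_1, e_n in the same block = same connected component of the quiver *)
Definition same_block (u v : V) : bool :=
  connect (fun x y => [exists a, ((s a == x) && (t a == y))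
                                 || ((s a == y) && (t a == x))]) u v.

End Paths.

(* Gluing the vertices v1 (= e_1) and vn (= e_n).                           *)
Section Gluing.
Variables (V E : finType) (s t : E -> V) (v1 vn : V) (hneq : v1 != vn).

(* vertices of Q_B: those of Q_A other than vn; v1 plays the role of f_1 *)
Definition VB : finType := {x : V | x != vn}.
Definition glue (x : V) : VB := insubd (exist (fun y => y != vn) v1 hneq) x.
Definition sB (a : E) : VB := glue (s a).
Definition tB (a : E) : VB := glue (t a).

(* generators of I_B : the r^* and the b^* c^* *)
Definition ZB (Z : seq (seq E)) : seq (seq E) :=
  Z ++ [seq [:: cb.1; cb.2] | cb <- [seq (c, b) | c <- enum E, b <- enum E]
         & [&& t cb.1 \in [:: v1; vn], s cb.2 \in [:: v1; vn] & t cb.1 != s cb.2]].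

Definition psi_pair (x : V * qpath V E) : VB * qpath VB E :=
  (glue x.1, (glue x.2.1, x.2.2)).

Variable Z : seq (seq E).

Definition nonspecial (p : qpath V E) : bool :=
  [&& in_basis s t Z p,
      ((psrc p == v1) && (ptgt t p == vn)) || ((psrc p == vn) && (ptgt t p == v1)),
      [forall a : E, (s a == ptgt t p) ==> ~~ in_basis s t Z (arrow_after p a)]
    & [forall b : E, (t b == psrc p) ==> ~~ in_basis s t Z (arrow_before s b p)]].

Definition nsp_list (N : nat) : seq (qpath V E) := filter nonspecial (basis s t Z N).
Definition nsp (N : nat) : nat := size (nsp_list N).

Variable k : fieldType.
Local Open Scope ring_scope.

Definition psi0 (N : nat) :
  'M[k]_(size (dom0 s t Z N), size (dom0 sB tB (ZB Z) N)) :=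
  \matrix_(i, j) (nat_of_bool (tnth (in_tuple (dom0 sB tB (ZB Z) N)) j
                               == psi_pair (tnth (in_tuple (dom0 s t Z N)) i)))%:R.

(* rows: the elements f_1 || p^* for p non-special; they span Z_nsp *)
Definition Znsp (N : nat) :
  'M[k]_(size (nsp_list N), size (dom0 sB tB (ZB Z) N)) :=
  \matrix_(i, j) (nat_of_bool (tnth (in_tuple (dom0 sB tB (ZB Z) N)) j
                   == (glue v1, (glue (tnth (in_tuple (nsp_list N)) i).1,
                                 (tnth (in_tuple (nsp_list N)) i).2))))%:R.

End Gluing.

(* Gluing e_1 and e_n does not merge basis elements: psi_0 maps the basis
   e||p of A (p a cycle at e) injectively into that of B, psi_1 does the same for
   the basis a||p of k(Q_1||B), and the remaining basis elements of B are the
   f_1||p^* with p a basis path of A from e_1 to e_n or back.  On the image of psi_0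
   the matrix of delta^0_B is that of delta^0_A (its entries there vanish outside the
   image of psi_1, and those in the image of psi_1 vanish outside the image of psi_0).
   If p is non-special, the row f_1||p^* is zero; otherwise some arrow b extends p to
   a basis path bp or pb, and the column of b||(bp)^* or b||(pb)^* has its only nonzero
   entry in the row f_1||p^*, which forces the f_1||p^*-coordinate of every kernel
   vector to vanish.  A
   non-special path joins e_1 and e_n, so there is none when they lie in different
   blocks. *)

From Pilot Require Import Defs.
From HB Require Import structures.
From mathcomp Require Import all_boot all_order all_algebra.
Import GRing.Theory.
Set Implicit Arguments. Unset Strict Implicit. Unset Printing Implicit Defensive.

Section PathEnumeration.
Variables (V E : finType) (s t : E -> V).

Lemma mem_words L w : (w \in words E L) = (size w == L).
Proof.
elim: L w => [|L IH] [|a w] //=; first by apply/allpairsP => -[? []].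
apply/allpairsP/idP => [[[b u] /= [_ Hu [_ ->]]]|Hw]; first by rewrite eqSS -IH.
by exists (a, w); rewrite mem_enum IH.
Qed.

Lemma words_uniq L : uniq (words E L).
Proof.
elim: L => [|L IH] //=; apply: allpairs_uniq => //; first exact: enum_uniq.
by move=> [a w] [b u] _ _ [-> ->].
Qed.

Lemma mem_words_lt N w :
  (w \in flatten [seq words E L | L <- iota 0 N]) = (size w < N).
Proof.
apply/flattenP/idP => [[u /mapP [L]]|Hw].
  by rewrite mem_iota => /= HL -> /[!mem_words] /eqP ->.
exists (words E (size w)); last by rewrite mem_words.
by apply/mapP; exists (size w); rewrite // mem_iota.
Qed.

Lemma words_lt_uniq N : uniq (flatten [seq words E L | L <- iota 0 N]).
Proof.
elim: N => [|N IH] //; rewrite -addn1 iotaD map_cat flatten_cat /= cats0.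
rewrite cat_uniq IH words_uniq andbT /=; apply/hasPn => w.
by rewrite mem_words mem_words_lt => /eqP ->; rewrite ltnn.
Qed.

Lemma mem_all_paths N p :
  (p \in all_paths s t N) = is_path s t p && (size p.2 < N).
Proof.
rewrite mem_filter; case: (is_path s t p) => //=; case: p => v w /=.
apply/allpairsP/idP => [[[u x] /= [_ Hx [_ ->]]]|Hw]; first by rewrite -mem_words_lt.
by exists (v, w); rewrite mem_enum mem_words_lt.
Qed.

Lemma all_paths_uniq N : uniq (all_paths s t N).
Proof.
apply/filter_uniq/allpairs_uniq; [exact: enum_uniq|exact: words_lt_uniq|].
by move=> [a w] [b u] _ _ [-> ->].
Qed.

End PathEnumeration.

Definition avoids (E : eqType) (Z : seq (seq E)) (w : seq E) : bool :=
  all (fun r => ~~ infix r w) Z.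

Lemma avoids_infix (E : eqType) (Z : seq (seq E)) w w' :
  infix w' w -> avoids Z w -> avoids Z w'.
Proof.
move=> w'w /allP Zw; apply/allP => r /Zw; apply: contra => rw'.
exact: infix_trans w'w.
Qed.

Section BasisPaths.
Variables (V E : finType) (s t : E -> V) (Z : seq (seq E)).

Local Notation arrow_path := (path (fun x y => t x == s y)).

Lemma in_basis_cons v a w :
  in_basis s t Z (v, a :: w) = [&& s a == v, arrow_path a w & avoids Z (a :: w)].
Proof. by rewrite /in_basis /is_path /= andbA. Qed.

Lemma in_basis_src v a w : in_basis s t Z (v, a :: w) -> s a = v.
Proof. by rewrite in_basis_cons => /andP [/eqP]. Qed.

Lemma in_basis_rcons v a w b :
  in_basis s t Z (v, rcons (a :: w) b) ->
  in_basis s t Z (v, a :: w) /\ t (last a w) = s b.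
Proof.
rewrite in_basis_cons in_basis_cons rcons_path.
move=> /and3P [-> /andP [-> /eqP ->] Zw]; split=> //.
by apply: avoids_infix Zw; rewrite -rcons_cons infix_rcons.
Qed.

Lemma in_basis_behead v a b w :
  in_basis s t Z (v, a :: b :: w) ->
  in_basis s t Z (s b, b :: w) /\ t a = s b.
Proof.
rewrite in_basis_cons => /and3P [_ /= /andP [/eqP ab bw] Zw]; split=> //.
by rewrite in_basis_cons eqxx bw (avoids_infix (infix_cons _ _) Zw).
Qed.

Lemma ptgt_cons v a w : ptgt t (v, a :: w) = t (last a w).
Proof. by rewrite /ptgt /= last_map. Qed.

Lemma ptgt_rcons v w a : ptgt t (v, rcons w a) = t a.
Proof. by rewrite /ptgt /= map_rcons last_rcons. Qed.

Variable N : nat.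

Lemma basis_uniq : uniq (basis s t Z N).
Proof. exact/filter_uniq/all_paths_uniq. Qed.

Lemma dom0_uniq : uniq (dom0 s t Z N).
Proof.
apply/filter_uniq/allpairs_uniq; [exact: enum_uniq|exact/filter_uniq/basis_uniq|].
by move=> [a w] [b u] _ _ [-> ->].
Qed.

Lemma cod0_uniq : uniq (cod0 s t Z N).
Proof.
apply/filter_uniq/allpairs_uniq; [exact: enum_uniq|exact: basis_uniq|].
by move=> [a w] [b u] _ _ [-> ->].
Qed.

Hypothesis admissible :
  forall p : qpath V E, is_path s t p -> plen p = N -> ~~ in_basis s t Z p.

Lemma in_basis_size p : in_basis s t Z p -> size p.2 < N.
Proof.
case: p => v w /andP [Pw Zw]; rewrite /= ltnNge; apply/negP => Nw.
have Pt : is_path s t (v, take N w).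
  case: w Nw Pw {Zw} => [|a w]; first by case: N.
  by case: N => [|n] //= _; rewrite /is_path /= => /andP [-> /(take_path n)].
have := admissible Pt; rewrite /plen size_take_min (minn_idPl Nw) => /(_ erefl).
by move/negP; apply; rewrite /in_basis Pt; exact: avoids_infix (infix_take w N) Zw.
Qed.

Lemma mem_basis p : (p \in basis s t Z N) = in_basis s t Z p.
Proof.
rewrite mem_filter mem_all_paths andbC.
case Bp: (in_basis s t Z p); rewrite ?andbF // (in_basis_size Bp) !andbT.
by case/andP: Bp.
Qed.

Lemma mem_dom0 x : (x \in dom0 s t Z N) =
  [&& in_basis s t Z x.2, 0 < size x.2.2, psrc x.2 == x.1 & ptgt t x.2 == x.1].
Proof.
rewrite mem_filter; case: x => e p /=.
have -> : ((e, p) \in [seq (e, p) | e <- enum V, p <- basis_pos s t Z N])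
          = in_basis s t Z p && (0 < size p.2).
  apply/allpairsP/idP => [[[e' p'] /= [_ + [_ ->]]]|Bp].
    by rewrite mem_filter mem_basis andbC.
  by exists (e, p); rewrite mem_enum mem_filter mem_basis andbC.
by rewrite andbC -andbA.
Qed.

Lemma mem_cod0 y : (y \in cod0 s t Z N) =
  [&& in_basis s t Z y.2, psrc y.2 == s y.1 & ptgt t y.2 == t y.1].
Proof.
rewrite mem_filter; case: y => a p /=.
have -> : ((a, p) \in [seq (a, p) | a <- enum E, p <- basis s t Z N])
          = in_basis s t Z p.
  apply/allpairsP/idP => [[[a' p'] /= [_ + [_ ->]]]|Bp]; first by rewrite mem_basis.
  by exists (a, p); rewrite mem_enum mem_basis.
by rewrite andbC.
Qed.

Lemma dom0P x : x \in dom0 s t Z N ->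
  exists a w, [/\ x = (s a, (s a, a :: w)), in_basis s t Z (s a, a :: w)
                & t (last a w) = s a].
Proof.
case: x => e [v [|a w]]; rewrite mem_dom0 /= ?andbF // => /and3P [Bp /eqP <- /eqP].
have sa := in_basis_src Bp; subst v.
by rewrite ptgt_cons => tw; exists a, w.
Qed.

Lemma cod0P y : y \in cod0 s t Z N ->
  exists b d, [/\ y = (b, (s b, d)), in_basis s t Z (s b, d) & ptgt t (s b, d) = t b].
Proof.
case: y => b [u d]; rewrite mem_cod0 /psrc /= => /and3P [Bd /eqP su /eqP].
by subst u; exists b, d.
Qed.

Lemma dom0_word_inj x y :
  x \in dom0 s t Z N -> y \in dom0 s t Z N -> x.2.2 = y.2.2 -> x = y.
Proof. by move=> /dom0P [a [w [-> _ _]]] /dom0P [b [u [-> _ _]]] /= [-> ->]. Qed.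

Lemma eq_dom0_word x y : x \in dom0 s t Z N -> y \in dom0 s t Z N ->
  (x.2.2 == y.2.2) = (x == y).
Proof. by move=> xA yA; apply/eqP/eqP => [/(dom0_word_inj xA yA)|->]. Qed.

Lemma delta0_coefE (k : fieldType) x y :
  x \in dom0 s t Z N -> y \in cod0 s t Z N ->
  delta0_coef s t Z k x y =
    ((y.2.2 == rcons x.2.2 y.1)%:R - (y.2.2 == y.1 :: x.2.2)%:R)%R.
Proof.
move=> /dom0P [b [w [-> Bx tw]]] /cod0P [a [d [-> Bd td]]] /=.
rewrite /delta0_coef /arrow_after /arrow_before /= !xpair_eqE eqxx /=.
congr (_%:R - _%:R)%R.
  case: (eqVneq d (b :: rcons w a)) => [Ed|]; rewrite ?andbF //; subst d.
  have [_ ab] := in_basis_rcons Bd.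
  have sab : s a = s b by rewrite -ab tw.
  by rewrite -sab eqxx Bd.
case: (eqVneq d [:: a, b & w]) => [Ed|]; rewrite ?andbF //; subst d.
by have [_ ->] := in_basis_behead Bd; rewrite eqxx Bd.
Qed.

End BasisPaths.

Local Notation tn D i := (tnth (in_tuple D) i).

Lemma eq_tn (T : eqType) (D : seq T) (i j : 'I_(size D)) :
  uniq D -> (tn D i == tn D j) = (i == j).
Proof. by move=> /(@tuple_uniqP _ _ (in_tuple D))/inj_eq. Qed.

Section TableMatrices.
Variable k : fieldType.
Local Open Scope ring_scope.

Lemma sum_natr_eq_mull n (F : 'I_n -> k) j0 :
  \sum_(j < n) (j == j0)%:R * F j = F j0.
Proof.
under eq_bigr do rewrite mulr_natl mulrb.
by rewrite -big_mkcond big_pred1_eq.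
Qed.

Definition table_mx (T T' : eqType) (D : seq T) (D' : seq T') (c : T -> T' -> k) :
    'M[k]_(size D, size D') :=
  \matrix_(i, j) c (tn D i) (tn D' j).

Definition incidence_mx (T T' : eqType) (D : seq T) (D' : seq T') (f : T -> T') :=
  table_mx D D' (fun x y => (y == f x)%:R).

Variables (T T' : eqType) (D : seq T) (D' : seq T') (f : T -> T').
Hypotheses (D'_uniq : uniq D') (f_into : {in D, forall x, f x \in D'}).

Lemma image_tn i : exists j, tn D' j = f (tn D i).
Proof.
by have /(tnthP (in_tuple D')) [j ->] := f_into (mem_tnth i (in_tuple D)); exists j.
Qed.

Lemma mul_tr_incidence r (M : 'M[k]_(r, size D')) q i j :
  tn D' j = f (tn D i) -> (M *m (incidence_mx D D' f)^T) q i = M q j.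
Proof.
move=> fi; rewrite mxE -[RHS](sum_natr_eq_mull (M q) j).
by apply: eq_bigr => l _; rewrite !mxE -fi eq_tn // mulrC.
Qed.

Lemma incidence_mul r (M : 'M[k]_(size D', r)) i q j :
  tn D' j = f (tn D i) -> (incidence_mx D D' f *m M) i q = M j q.
Proof.
move=> fi; have := mul_tr_incidence M^T q fi.
by rewrite -trmx_mul mxE [M^T _ _]mxE.
Qed.

Lemma incidence_mul_tr (U : eqType) (D2 : seq U) (f2 : U -> T') :
  incidence_mx D D' f *m (incidence_mx D2 D' f2)^T
    = table_mx D D2 (fun x y => (f x == f2 y)%:R).
Proof.
apply/matrixP => i i'; have [j fi] := image_tn i.
by rewrite (incidence_mul _ _ fi) !mxE fi.
Qed.

Hypotheses (D_uniq : uniq D) (f_inj : {in D &, injective f}).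

Lemma incidence_mul_tr_id : incidence_mx D D' f *m (incidence_mx D D' f)^T = 1%:M.
Proof.
rewrite incidence_mul_tr; apply/matrixP => i i'; rewrite !mxE -(eq_tn i i' D_uniq).
by rewrite (inj_in_eq f_inj) ?mem_tnth.
Qed.

Lemma row_free_incidence : row_free (incidence_mx D D' f).
Proof. by apply/row_freeP; exists (incidence_mx D D' f)^T; exact: incidence_mul_tr_id. Qed.

Lemma mul_tr_incidence_incidence r (M : 'M[k]_(r, size D')) q j :
  (M *m (incidence_mx D D' f)^T *m incidence_mx D D' f) q j
    = (tn D' j \in map f D)%:R * M q j.
Proof.
rewrite mxE; have [/mapP [x xD fx]|notin] := boolP (tn D' j \in map f D).
  have /(tnthP (in_tuple D)) [i0 xi0] := xD; subst x.
  rewrite mul1r -(mul_tr_incidence M q fx) -(sum_natr_eq_mull _ i0).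
  apply: eq_bigr => i _; rewrite mulrC [X in X * _]mxE fx.
  by rewrite (inj_in_eq f_inj) ?mem_tnth // eq_tn // eq_sym.
rewrite mul0r big1 // => i _; rewrite [X in _ * X]mxE.
have [fi|] := eqVneq (tn D' j) (f (tn D i)); last by rewrite mulr0.
by move: notin; rewrite fi map_f ?mem_tnth.
Qed.

End TableMatrices.

Section KernelSplitting.
Variables (k : fieldType) (TA TB CA CB TN : eqType).
Variables (dA : seq TA) (dB : seq TB) (cA : seq CA) (cB : seq CB) (ns : seq TN).
Variables (psi : TA -> TB) (psi' : CA -> CB) (nsv : TN -> TB).
Variables (coefA : TA -> CA -> k) (coefB : TB -> CB -> k).
Local Open Scope ring_scope.

Definition isolated_row (x' : TB) : Prop :=
  exists2 c', c' \in cB & exists2 sg : k, sg != 0 &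
    {in dB, forall x'', coefB x'' c' = sg * (x'' == x')%:R}.

Hypotheses (dA_uniq : uniq dA) (dB_uniq : uniq dB) (cA_uniq : uniq cA)
  (cB_uniq : uniq cB) (ns_uniq : uniq ns).
Hypotheses (psi_into : {in dA, forall x, psi x \in dB})
  (nsv_into : {in ns, forall p, nsv p \in dB})
  (psi'_into : {in cA, forall c, psi' c \in cB}).
Hypotheses (psi_inj : {in dA &, injective psi}) (psi'_inj : {in cA &, injective psi'})
  (nsv_inj : {in ns &, injective nsv})
  (psi_nsv_neq : {in dA & ns, forall x p, psi x != nsv p}).
Hypothesis coefB_psi : {in dA & cA, forall x c, coefB (psi x) (psi' c) = coefA x c}.
Hypothesis coefB_psi_supp : forall x c', x \in dA -> c' \in cB ->
  coefB (psi x) c' != 0 -> c' \in map psi' cA.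
Hypothesis coefB_psi'_supp : forall x' c, x' \in dB -> c \in cA ->
  coefB x' (psi' c) != 0 -> x' \in map psi dA.
Hypothesis coefB_nsv : {in ns & cB, forall p c', coefB (nsv p) c' = 0}.
Hypothesis dB_cover : forall x', x' \in dB ->
  [\/ x' \in map psi dA, x' \in map nsv ns | isolated_row x'].

(* [P], [Q] and [Zn] are the matrices of psi_0, of psi_1 on k(Q_1||B), and of the
   spanning family of Z_nsp. *)
Local Notation mxA := (table_mx dA cA coefA).
Local Notation mxB := (table_mx dB cB coefB).
Local Notation P := (incidence_mx k dA dB psi).
Local Notation Q := (incidence_mx k cA cB psi').
Local Notation Zn := (incidence_mx k ns dB nsv).

Lemma mxB_restrict : P *m mxB *m Q^T = mxA.
Proof.
apply/matrixP => i c; have [c' fc] := image_tn psi'_into c.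
have [j fi] := image_tn psi_into i.
rewrite (mul_tr_incidence cB_uniq _ _ fc) (incidence_mul dB_uniq _ _ fi).
by rewrite !mxE fi fc coefB_psi ?mem_tnth.
Qed.

Lemma mxB_psi_rows : P *m mxB *m Q^T *m Q = P *m mxB.
Proof.
apply/matrixP => i c'; rewrite (mul_tr_incidence_incidence cB_uniq) //.
have [j fi] := image_tn psi_into i; rewrite (incidence_mul dB_uniq _ _ fi) mxE fi.
have [->|nz] := eqVneq (coefB (psi (tn dA i)) (tn cB c')) 0; first by rewrite mulr0.
by rewrite (coefB_psi_supp _ _ nz) ?mem_tnth ?mul1r.
Qed.

Lemma mxB_psi'_cols : P^T *m P *m (mxB *m Q^T) = mxB *m Q^T.
Proof.
apply: trmx_inj; rewrite !trmx_mul !trmxK mulmxA; apply/matrixP => c j.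
rewrite (mul_tr_incidence_incidence dB_uniq) //.
have [c' fc] := image_tn psi'_into c; rewrite (incidence_mul cB_uniq _ _ fc) !mxE.
rewrite fc; have [->|nz] := eqVneq (coefB (tn dB j) (psi' (tn cA c))) 0.
  by rewrite mulr0.
by rewrite (coefB_psi'_supp _ _ nz) ?mem_tnth ?mul1r.
Qed.

Lemma nsv_mxB : Zn *m mxB = 0.
Proof.
apply/matrixP => p c'; have [j fp] := image_tn nsv_into p.
by rewrite (incidence_mul dB_uniq _ _ fp) !mxE fp coefB_nsv ?mem_tnth.
Qed.

Lemma psi_nsv_orthogonal : P *m Zn^T = 0.
Proof.
rewrite incidence_mul_tr //; apply/matrixP => i p; rewrite !mxE.
by rewrite (negbTE (psi_nsv_neq _ _)) ?mem_tnth.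
Qed.

Lemma ker_mxB_split r (Y : 'M[k]_(r, size dB)) :
  Y *m mxB = 0 -> Y = Y *m P^T *m P + Y *m Zn^T *m Zn.
Proof.
move=> Y0; apply/matrixP => q j.
rewrite mxE !(mul_tr_incidence_incidence dB_uniq) // -mulrDl.
have [/mapP [x xA ->]|/mapP [p pN ->]|[c' c'B [sg sg0 isolate]]] :=
  dB_cover (mem_tnth j (in_tuple dB)).
- suff /negbTE -> : psi x \notin map nsv ns by rewrite map_f // addr0 mul1r.
  by apply/mapP => -[p pN]; apply/eqP/psi_nsv_neq.
- suff /negbTE -> : nsv p \notin map psi dA by rewrite map_f // add0r mul1r.
  by apply/mapP => -[x xA /esym]; apply/eqP/psi_nsv_neq.
(* The column isolating row [j] reads off [Y q j], up to a unit. *)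
suff -> : Y q j = 0 by rewrite mulr0.
have /(tnthP (in_tuple cB)) [c c'E] := c'B; subst c'.
have /matrixP/(_ q c) := Y0; rewrite !mxE.
under eq_bigr => l _ do
  rewrite mxE (isolate _ (mem_tnth l (in_tuple dB))) eq_tn // mulrC -mulrA.
by rewrite -big_distrr /= sum_natr_eq_mull => /eqP; rewrite mulf_eq0 (negbTE sg0) => /eqP.
Qed.

Lemma cap_psi_nsv r (X : 'M[k]_(r, size dA)) : (X *m P :&: Zn)%MS = 0.
Proof.
set C := (X *m P :&: Zn)%MS.
have /submxP [U CU] : (C <= X *m P)%MS by exact: capmxSl.
have /submxP [W CW] : (C <= Zn)%MS by exact: capmxSr.
have : C *m Zn^T = W by rewrite CW -mulmxA incidence_mul_tr_id // mulmx1.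
rewrite {1}CU -!mulmxA psi_nsv_orthogonal !mulmx0 => W0.
by rewrite CW -W0 mul0mx.
Qed.

Lemma kermx_mxB : (kermx mxB :=: kermx mxA *m P + Zn)%MS.
Proof.
apply/eqmxP/andP; split.
  rewrite {1}(ker_mxB_split (mulmx_ker mxB)) addmx_sub_adds ?submxMl //.
  apply: submxMr; rewrite sub_kermx -mxB_restrict -mulmxA -[P *m mxB *m Q^T]mulmxA.
  by rewrite [P^T *m _]mulmxA mxB_psi'_cols mulmxA mulmx_ker mul0mx.
rewrite addsmx_sub !sub_kermx nsv_mxB eqxx andbT.
by rewrite -mulmxA -mxB_psi_rows mxB_restrict mulmxA mulmx_ker mul0mx.
Qed.

Theorem kermx_mxB_decomposition :
  (kermx mxB :=: kermx mxA *m P + Zn)%MS /\ mxdirect (kermx mxA *m P + Zn) /\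
  \rank (kermx mxB) = (\rank (kermx mxA) + size ns)%N.
Proof.
split; first exact: kermx_mxB.
split; first exact/mxdirect_addsP/cap_psi_nsv.
rewrite kermx_mxB mxrank_disjoint_sum ?cap_psi_nsv // mxrankMfree ?row_free_incidence //.
by move: (row_free_incidence k dB_uniq nsv_into ns_uniq nsv_inj) => /eqP ->.
Qed.

End KernelSplitting.

Section Gluing.
Variables (V E : finType) (s t : E -> V) (v1 vn : V) (hneq : v1 != vn).
Variable Z : seq (seq E).

Local Notation g := (glue hneq).
Local Notation sB := (sB s hneq).
Local Notation tB := (tB t hneq).
Local Notation ZB := (ZB s t v1 vn Z).
Local Notation ends := [:: v1; vn].
Local Notation arrow_path := (path (fun x y => t x == s y)).
Local Notation arrow_pathB := (path (fun x y => tB x == sB y)).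

Lemma val_glue x : val (g x) = if x == vn then v1 else x.
Proof. by rewrite /glue val_insubd; case: eqP. Qed.

Lemma glue_ends u u' : u \in ends -> u' \in ends -> g u = g u'.
Proof.
rewrite !inE => /orP [] /eqP -> /orP [] /eqP ->; apply: val_inj.
all: by rewrite !val_glue ?eqxx ?(negbTE hneq).
Qed.

Lemma glue_eqP u u' : g u = g u' -> u = u' \/ (u \in ends) && (u' \in ends).
Proof.
move/(congr1 val); rewrite !val_glue !inE.
case: (u =P vn) => [->|_]; case: (u' =P vn) => [->|_]; rewrite ?eqxx ?orbT.
- by right.
- by move=> <-; right; rewrite eqxx.
- by move=> ->; right; rewrite eqxx.
- by left.
Qed.

Definition glued_pair (c d : E) : bool :=
  [&& t c \in ends, s d \in ends & t c != s d].

Lemma avoids_ZB w :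
  avoids ZB w = avoids Z w && [forall c, forall d, glued_pair c d ==> ~~ infix [:: c; d] w].
Proof.
rewrite /avoids /ZB all_cat; congr andb.
apply/allP/forallP => [cdw c|cdw r /mapP [[c d] /=]].
  apply/forallP => d; apply/implyP => cd; apply: (cdw [:: c; d]).
  apply/mapP; exists (c, d) => //; rewrite mem_filter /= [glued_pair _ _ as X in X && _]cd.
  by apply/allpairsP; exists (c, d); rewrite !mem_enum.
rewrite mem_filter /= => /andP [cd _] ->.
by move: (cdw c) => /forallP /(_ d) /implyP; apply.
Qed.

Lemma arrow_path_glue a w : arrow_path a w -> arrow_pathB a w.
Proof. by apply: sub_path => x y /eqP; rewrite /tB /sB => ->. Qed.

Lemma arrow_path_infix2 a w c d :
  arrow_path a w -> infix [:: c; d] (a :: w) -> t c = s d.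
Proof.
elim: w a => [|b w IH] a /=; first by rewrite andbF.
move=> /andP [/eqP ab bw] /orP [/and3P [/eqP -> /eqP -> _] // | cd].
by apply: (IH b bw); rewrite infix_consl /=.
Qed.

Lemma arrow_path_unglue a w :
  arrow_pathB a w -> (forall c d, glued_pair c d -> ~~ infix [:: c; d] (a :: w)) ->
  arrow_path a w.
Proof.
elim: w a => [//|b w IH] a /andP [/eqP ab bw] cdw /=; apply/andP; split.
  have [-> //|/andP [ta sb]] := glue_eqP ab; apply/negPn/negP => tsab.
  have /cdw : glued_pair a b by rewrite /glued_pair ta sb.
  by move/negP; apply; apply/infixP; exists [::], w.
apply: (IH b bw) => c d /cdw; apply: contra => cd.
by apply: (infix_trans cd); rewrite infix_cons.
Qed.

Lemma in_basis_glue_cons x a w :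
  in_basis sB tB ZB (x, a :: w) = (sB a == x) && in_basis s t Z (s a, a :: w).
Proof.
rewrite !in_basis_cons avoids_ZB eqxx /=; case: (sB a == x) => //=.
have [aw|] := boolP (arrow_path a w).
  rewrite (arrow_path_glue aw) /=; case: (avoids Z _) => //=.
  apply/forallP => c; apply/forallP => d; apply/implyP => /and3P [_ _ /negbTE tcd].
  by apply/negP => /(arrow_path_infix2 aw) /eqP; rewrite tcd.
apply: contraNF => /andP [awB /andP [_ cdw]]; apply: arrow_path_unglue awB _ => c d cd.
by move: cdw => /forallP /(_ c) /forallP /(_ d) /implyP; apply.
Qed.

Lemma in_basis_glue_nil x v : in_basis sB tB ZB (x, [::]) = in_basis s t Z (v, [::]).
Proof.
change (avoids ZB [::] = avoids Z [::]); rewrite avoids_ZB; case: (avoids Z _) => //=.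
by apply/forallP => c; apply/forallP => d; apply/implyP.
Qed.

Lemma ptgt_glue u d : ptgt tB (g u, d) = g (ptgt t (u, d)).
Proof. by rewrite /ptgt /= -(last_map g) -map_comp. Qed.

Variable N : nat.
Hypothesis admissible :
  forall p : qpath V E, is_path s t p -> plen p = N -> ~~ in_basis s t Z p.

Lemma admissible_glue (p : qpath (VB vn) E) :
  is_path sB tB p -> plen p = N -> ~~ in_basis sB tB ZB p.
Proof.
case: p => x [|a w] _ Np; first by rewrite (in_basis_glue_nil x v1) admissible.
rewrite in_basis_glue_cons; apply/negP => /andP [_ Bp].
by have /negP := admissible (proj1 (andP Bp)) Np.
Qed.

Local Notation dA := (dom0 s t Z N).
Local Notation dB := (dom0 sB tB ZB N).
Local Notation cA := (cod0 s t Z N).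
Local Notation cB := (cod0 sB tB ZB N).
Local Notation ns := (nsp_list s t v1 vn Z N).
Local Notation psi := (psi_pair hneq).

Definition glue_arrow_pair (y : E * qpath V E) : E * qpath (VB vn) E :=
  (y.1, (g y.2.1, y.2.2)).
Definition nsp_pair (p : qpath V E) : VB vn * qpath (VB vn) E := (g v1, (g p.1, p.2)).

Local Notation psi' := glue_arrow_pair.

Lemma psi_pair_dom0 x : x \in dA -> psi x \in dB.
Proof.
move=> /(dom0P admissible) [a [w [-> Bp tw]]].
rewrite (mem_dom0 admissible_glue) /= in_basis_glue_cons eqxx Bp.
by rewrite ptgt_cons /Defs.tB tw eqxx.
Qed.

Lemma nsp_listP p : p \in ns -> exists a w,
  [/\ p = (s a, a :: w), nonspecial s t v1 vn Z p, s a \in ends, t (last a w) \in ends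
    & s a != t (last a w)].
Proof.
rewrite mem_filter => /andP [nsp _]; move: (nsp) => /and4P [Bp].
case: p Bp nsp => v [|a w] Bp nsp.
  by rewrite /psrc /ptgt /= => /orP [] /andP [/eqP -> /eqP vv]; move: hneq; rewrite vv eqxx.
have sa := in_basis_src Bp; subst v.
rewrite /psrc ptgt_cons /= => ends_aw _ _; exists a, w; split => //; rewrite ?inE.
all: case/orP: ends_aw => /andP [/eqP sa1 /eqP tw].
all: by rewrite ?sa1 ?tw ?eqxx ?orbT ?hneq // eq_sym hneq.
Qed.

Lemma nsp_pair_dom0 p : p \in ns -> nsp_pair p \in dB.
Proof.
move=> /nsp_listP [a [w [-> /and4P [Bp _ _ _] sa tw _]]].
rewrite (mem_dom0 admissible_glue) /= in_basis_glue_cons eqxx Bp ptgt_cons /Defs.tB.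
by rewrite (glue_ends sa (mem_head _ _)) (glue_ends tw (mem_head _ _)) eqxx.
Qed.

Lemma psi_pair_inj : {in dA &, injective psi}.
Proof.
move=> x y xA yA /(congr1 (fun z => z.2.2)) /= xy.
exact: (dom0_word_inj admissible).
Qed.

Lemma nsp_pair_inj : {in ns &, injective nsp_pair}.
Proof.
move=> p q /nsp_listP [a [w [-> _ _ _ _]]] /nsp_listP [b [u [-> _ _ _ _]]].
by case=> _ -> ->.
Qed.

Lemma psi_pair_neq_nsp_pair : {in dA & ns, forall x p, psi x != nsp_pair p}.
Proof.
move=> x p /(dom0P admissible) [a [w [-> _ tw]]] /nsp_listP [b [u [-> _ _ _ neq]]].
by apply: contraNneq neq => -[_ _ <- <-]; rewrite tw.
Qed.

Lemma glue_arrow_pair_cod0 y : y \in cA -> psi' y \in cB.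
Proof.
move=> /(cod0P admissible) [b [d [-> Bd td]]].
rewrite (mem_cod0 admissible_glue) /= ptgt_glue td !eqxx !andbT.
case: d Bd {td} => [|a d] Bd; first by rewrite (in_basis_glue_nil _ (s b)).
by rewrite in_basis_glue_cons /Defs.sB (in_basis_src Bd) eqxx Bd.
Qed.

Lemma glue_arrow_pair_inj : {in cA &, injective psi'}.
Proof.
move=> y z /(cod0P admissible) [b [d [-> _ _]]] /(cod0P admissible) [c [e [-> _ _]]].
by case=> -> _ ->.
Qed.

Lemma delta0_coef_glue (k : fieldType) x y : x \in dA -> y \in cA ->
  delta0_coef sB tB ZB k (psi x) (psi' y) = delta0_coef s t Z k x y.
Proof.
move=> xA yA.
rewrite (delta0_coefE admissible_glue) ?psi_pair_dom0 ?glue_arrow_pair_cod0 //.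
by rewrite (delta0_coefE admissible).
Qed.

Lemma dom0_glueP x' : x' \in dB -> exists a w,
  [/\ x' = (g (s a), (g (s a), a :: w)), in_basis s t Z (s a, a :: w)
    & g (t (last a w)) = g (s a)].
Proof.
move=> /(dom0P admissible_glue) [a [w [-> + tw]]].
by rewrite in_basis_glue_cons => /andP [_ Bp]; exists a, w.
Qed.

Lemma mem_map_psi_pair a w : in_basis s t Z (s a, a :: w) -> t (last a w) = s a ->
  (g (s a), (g (s a), a :: w)) \in map psi dA.
Proof.
move=> Bp tw; apply/mapP; exists (s a, (s a, a :: w)) => //.
by rewrite (mem_dom0 admissible) /= Bp ptgt_cons tw !eqxx.
Qed.

Lemma mem_map_glue_arrow_pair b d : in_basis s t Z (s b, d) -> ptgt t (s b, d) = t b ->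
  (b, (g (s b), d)) \in map psi' cA.
Proof.
move=> Bd td; apply/mapP; exists (b, (s b, d)) => //.
by rewrite (mem_cod0 admissible) /= Bd td !eqxx.
Qed.

Section Coefficients.
Variable k : fieldType.
Local Notation coefB := (delta0_coef sB tB ZB k).

Lemma psi_pair_coef_supp x y' : x \in dA -> y' \in cB ->
  coefB (psi x) y' != 0%R -> y' \in map psi' cA.
Proof.
move=> xA y'B; rewrite (delta0_coefE admissible_glue) ?psi_pair_dom0 //.
move: xA y'B => /(dom0P admissible) [a [w [-> Bp tw]]].
move=> /(cod0P admissible_glue) [b [d [-> + _]]] /=.
case: (eqVneq d (rcons (a :: w) b)) => [-> | _].
  rewrite in_basis_glue_cons => /andP [_ Bd] _; have [_ tb] := in_basis_rcons Bd.
  have sab : s a = s b by rewrite -tb tw.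
  by apply: mem_map_glue_arrow_pair; rewrite ?ptgt_rcons // -sab.
case: (eqVneq d [:: b, a & w]) => [-> | _]; last by rewrite subrr eqxx.
rewrite in_basis_glue_cons => /andP [_ Bd] _; have [_ tb] := in_basis_behead Bd.
by apply: mem_map_glue_arrow_pair; rewrite // ptgt_cons tw tb.
Qed.

Lemma glue_arrow_pair_coef_supp x' y : x' \in dB -> y \in cA ->
  coefB x' (psi' y) != 0%R -> x' \in map psi dA.
Proof.
move=> x'B yA; rewrite (delta0_coefE admissible_glue) ?glue_arrow_pair_cod0 //.
move: x'B yA => /dom0_glueP [a [w [-> Bp _]]] /(cod0P admissible) [b [d [-> Bd td]]] /=.
apply: contraNT => /negbTE notA; apply/eqP.
case: (eqVneq d (rcons (a :: w) b)) => [dE | _].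
  subst d; have [/in_basis_src sab tb] := in_basis_rcons Bd.
  by move: notA; rewrite mem_map_psi_pair // tb sab.
case: (eqVneq d [:: b, a & w]) => [dE | _]; last by rewrite subrr.
subst d; have [_ tb] := in_basis_behead Bd.
by move: notA; rewrite mem_map_psi_pair // -tb -td ptgt_cons.
Qed.

Lemma nsp_pair_coef p y' : p \in ns -> y' \in cB -> coefB (nsp_pair p) y' = 0%R.
Proof.
move=> pN y'B; rewrite (delta0_coefE admissible_glue) ?nsp_pair_dom0 //.
move: pN y'B => /nsp_listP [a [w [-> /and4P [_ _ /forallP after /forallP before] _ _ _]]].
move=> /(cod0P admissible_glue) [b [d [-> + _]]] /=.
case: (eqVneq d (rcons (a :: w) b)) => [-> | _].
  rewrite in_basis_glue_cons => /andP [_ Bd]; have [_ tb] := in_basis_rcons Bd.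
  by move: (after b); rewrite ptgt_cons tb eqxx /= Bd.
case: (eqVneq d [:: b, a & w]) => [-> | _]; last by rewrite subrr.
rewrite in_basis_glue_cons => /andP [_ Bd]; have [_ tb] := in_basis_behead Bd.
by move: (before b); rewrite /psrc /= tb eqxx /= Bd.
Qed.

Section Isolation.
Variables (a : E) (w : seq E).
Local Notation x' := (g (s a), (g (s a), a :: w)).
Hypotheses (x'B : x' \in dB) (tw : t (last a w) != s a).

Let gtw : g (t (last a w)) = g (s a).
Proof.
by move: x'B; rewrite (mem_dom0 admissible_glue) ptgt_cons => /and4P [_ _ _ /eqP].
Qed.

Lemma isolated_after b :
  s b = t (last a w) -> in_basis s t Z (arrow_after (s a, a :: w) b) ->
  isolated_row dB cB coefB x'.
Proof.
move=> sb Bb; have y'B : (b, (g (s a), rcons (a :: w) b)) \in cB.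
  rewrite (mem_cod0 admissible_glue) /= in_basis_glue_cons eqxx Bb.
  by rewrite -rcons_cons ptgt_rcons -gtw -sb !eqxx.
exists (b, (g (s a), rcons (a :: w) b)) => //; exists 1%R; first exact: oner_neq0.
move=> x'' x''B; rewrite (delta0_coefE admissible_glue) // eqseq_rcons eqxx andbT.
rewrite [a :: w == _]eq_sym (eq_dom0_word admissible_glue x''B x'B).
suff /negbTE -> : a :: rcons w b != b :: x''.2.2 by rewrite subr0 mul1r.
by apply: contra tw; rewrite eqseq_cons => /andP [/eqP ab _]; rewrite -sb ab.
Qed.

Lemma isolated_before b :
  t b = s a -> in_basis s t Z (arrow_before s b (s a, a :: w)) ->
  isolated_row dB cB coefB x'.
Proof.
move=> tb Bb; have y'B : (b, (g (s b), [:: b, a & w])) \in cB.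
  rewrite (mem_cod0 admissible_glue) /= in_basis_glue_cons eqxx Bb ptgt_cons /=.
  by rewrite /Defs.tB gtw tb !eqxx.
exists (b, (g (s b), [:: b, a & w])) => //.
exists (-1)%R; first by rewrite oppr_eq0 oner_neq0.
move=> x'' x''B; rewrite (delta0_coefE admissible_glue) //= eqseq_cons eqxx /=.
rewrite [a :: w == _]eq_sym (eq_dom0_word admissible_glue x''B x'B).
suff /negbTE -> : [:: b, a & w] != rcons x''.2.2 b by rewrite sub0r mulN1r.
apply: contra tw => /eqP /(congr1 (last b)); rewrite last_rcons /= => ->.
by rewrite tb.
Qed.

End Isolation.

Lemma dom0_glue_cover x' : x' \in dB ->
  [\/ x' \in map psi dA, x' \in map nsp_pair ns | isolated_row dB cB coefB x'].
Proof.
move=> x'B; have [a [w [x'E Bp gtw]]] := dom0_glueP x'B; rewrite x'E in x'B *.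
have [tw|tw] := eqVneq (t (last a w)) (s a); first by apply/Or31/mem_map_psi_pair.
case: (glue_eqP gtw) => [/eqP|/andP [tw_ends sa_ends]]; first by rewrite (negbTE tw).
have ends_aw : ((psrc (s a, a :: w) == v1) && (ptgt t (s a, a :: w) == vn))
            || ((psrc (s a, a :: w) == vn) && (ptgt t (s a, a :: w) == v1)).
  move: tw_ends sa_ends tw; rewrite /psrc ptgt_cons !inE.
  by do 2 case/orP => /eqP ->; rewrite ?eqxx ?orbT.
have [nsp|] := boolP (nonspecial s t v1 vn Z (s a, a :: w)).
  apply/Or32/mapP; exists (s a, a :: w); first by rewrite mem_filter nsp mem_basis.
  by rewrite /nsp_pair /= (glue_ends sa_ends (mem_head _ _)).
rewrite /nonspecial Bp ends_aw /= => /nandP [] /forallPn [b].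
  rewrite negb_imply negbK ptgt_cons => /andP [/eqP sb Bb].
  exact/Or33/(isolated_after x'B tw sb).
by rewrite negb_imply negbK => /andP [/eqP tb Bb]; apply/Or33/(isolated_before x'B tw tb).
Qed.

End Coefficients.

Local Notation adjacent :=
  (fun x y => [exists a, ((s a == x) && (t a == y)) || ((s a == y) && (t a == x))]).

Lemma connect_arrow_path a w : arrow_path a w -> connect adjacent (s a) (t (last a w)).
Proof.
elim: w a => [|b w IH] a /=.
  by move=> _; apply: connect1; apply/existsP; exists a; rewrite !eqxx.
move=> /andP [/eqP ab bw]; apply: connect_trans (IH b bw).
by apply: connect1; apply/existsP; exists a; rewrite ab !eqxx.
Qed.

Lemma nsp_same_block p : p \in ns -> same_block s t v1 vn.
Proof.
move=> /nsp_listP [a [w [-> /and4P [+ ends_aw _ _] _ _ _]]].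
rewrite in_basis_cons => /and3P [_ /connect_arrow_path + _]; move: ends_aw.
rewrite /psrc ptgt_cons /= => /orP [] /andP [/eqP -> /eqP ->] // vn_v1.
rewrite /same_block (sym_connect_sym _) // => x y.
by apply/existsP/existsP => -[c xy]; exists c; rewrite orbC.
Qed.

Lemma nsp_eq0 : ~~ same_block s t v1 vn -> nsp s t v1 vn Z N = 0.
Proof.
by rewrite /nsp; case: ns (@nsp_same_block) => [//|p ps] /(_ p (mem_head _ _)) ->.
Qed.

Lemma delta0_glue_decomposition (k : fieldType) :
  let KA := kermx (delta0 s t Z k N) in
  let KB := kermx (delta0 sB tB ZB k N) in
  let PA := (KA *m psi0 s t hneq Z k N)%R in
  (KB :=: PA + Znsp s t hneq Z k N)%MS /\ mxdirect (PA + Znsp s t hneq Z k N) /\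
  \rank KB = (\rank KA + nsp s t v1 vn Z N)%N.
Proof.
exact: (kermx_mxB_decomposition (dom0_uniq s t Z N) (dom0_uniq sB tB ZB N)
  (cod0_uniq s t Z N) (cod0_uniq sB tB ZB N) (filter_uniq _ (basis_uniq s t Z N))
  psi_pair_dom0 nsp_pair_dom0 glue_arrow_pair_cod0 psi_pair_inj glue_arrow_pair_inj
  nsp_pair_inj psi_pair_neq_nsp_pair (@delta0_coef_glue k) (@psi_pair_coef_supp k)
  (@glue_arrow_pair_coef_supp k) (@nsp_pair_coef k) (@dom0_glue_cover k)).
Qed.

End Gluing.

Unset Implicit Arguments.

Theorem lemma6p2 (k : fieldType) (V E : finType) (s t : E -> V)
  (Z : seq (seq E)) (N : nat) (v1 vn : V) (hneq : v1 != vn) :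
  (* Z is a minimal set of paths of length >= 2 *)
  (forall r, r \in Z -> is_relation s t r) ->
  (forall r r', r \in Z -> r' \in Z -> infix r r' -> r = r') ->
  (* admissibility: every path of length N lies in I_A *)
  (forall p : qpath V E, is_path s t p -> plen p = N -> ~~ in_basis s t Z p) ->
  (* e_1 and e_n are not isolated *)
  (exists a, (s a == v1) || (t a == v1)) ->
  (exists a, (s a == vn) || (t a == vn)) ->
  let KA := kermx (delta0 s t Z k N) in
  let KB := kermx (delta0 (sB s hneq) (tB t hneq) (ZB s t v1 vn Z) k N) in
  let PA := (KA *m psi0 s t hneq Z k N)%R in
  let ZN := Znsp s t hneq Z k N in
  (KB :=: PA + ZN)%MS /\ mxdirect (PA + ZN) /\
  (same_block s t v1 vn -> \rank KB = (\rank KA + nsp s t v1 vn Z N)%N) /\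
  (~~ same_block s t v1 vn -> \rank KB = \rank KA).
Proof.
move=> _ _ admissible _ _ KA KB PA ZN.
have [KBE [direct rankKB]] := delta0_glue_decomposition hneq admissible k.
do 3 split => //.
by rewrite rankKB => /(nsp_eq0 hneq) ->; rewrite addn0.
Qed.
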